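(* Let $p>q\geq 2$ be relatively prime integers with $p\geq 2q-1$, and let $k>0$ be an integer. Then there exists a finite union of intervals $I\subseteq[0,1)$ of total length at most $(q/p)^k$ such that $Z_{p/q}(I)\neq\emptyset$.
   Context: For $x\in\mathbb{R}$, $\{x\}=x-\lfloor x\rfloor$ denotes the fractional part. For relatively prime integers $p>q>1$ and $S\subseteq[0,1)$, $Z_{p/q}(S)=\{\xi>0 \mid \{\xi (p/q)^i\}\in S \text{ for every } i\in\mathbb{N}\}$, where $\mathbb{N}=\{0,1,2,\dots\}$. *)

From HB Require Import structures.
From mathcomp Require Import all_boot all_order all_algebra.
From mathcomp Require Import all_classical all_reals all_analysis.
Set Implicit Arguments. Unset Strict Implicit. Unset Printing Implicit Defensive.
Import Order.TTheory GRing.Theory Num.Theory.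
Local Open Scope classical_set_scope.
Local Open Scope ring_scope.

Definition frac {R : realType} (x : R) : R := x - (Num.floor x)%:~R.

Definition Zset {R : realType} (r : R) (S : set R) : set R :=
  [set xi | 0 < xi /\ forall i : nat, S (frac (xi * r ^+ i))].

Definition union_itv {R : realType} (s : seq (interval R)) : set R :=
  \big[setU/set0]_(j <- s) [set` j].

From Pilot Require Import Defs.
From HB Require Import structures.
From mathcomp Require Import all_boot all_order all_algebra.
From mathcomp Require Import all_classical all_reals all_analysis.
From mathcomp Require Import zify.
Import Order.TTheory GRing.Theory Num.Theory.

(* Put r = p/q, N_0 = 1 and N_(j+1) = ceil(p N_j / q). Because p >= 2q - 1 the
   intervals [N_j r^-j, (N_j + 1) r^-j] are nested, so some xi satisfies
   N_j <= xi r^j <= N_j + 1 for every j. For y = xi r^k / p^k, the fractional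
   part of y r^i then lies in [m, m + 1] / p^k (mod 1) with m = N_(k+i) mod p^k.
   The map n |-> ceil(p n / q) sends n + q t to ceil(p n / q) + p t, so its k-th
   iterate, which maps N_i to N_(k+i), reduces to a map from residues mod q^k to
   residues mod p^k: m takes at most q^k values, and the corresponding intervals
   of length p^-k have total length (q/p)^k. *)

Local Open Scope classical_set_scope.
Local Open Scope ring_scope.

Section CeilDiv.
Local Open Scope nat_scope.

Definition ceil_div (a d : nat) : nat := (a + d.-1) %/ d.

Lemma ceil_div_ge a d : 0 < d -> a <= d * ceil_div a d.
Proof. by move=> d_gt0; have := ltn_ceil (a + d.-1) d_gt0; rewrite /ceil_div; lia. Qed.

Lemma ceil_div_le a d : d * ceil_div a d <= a + d.-1.
Proof. by rewrite mulnC leq_divM. Qed.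

Lemma ceil_divDMl a b d : 0 < d -> ceil_div (a + b * d) d = ceil_div a d + b.
Proof. by move=> d_gt0; rewrite /ceil_div addnAC divnDMl. Qed.

Definition ceil_scale (p q n : nat) : nat := ceil_div (p * n) q.

Definition ceil_orbit (p q j : nat) : nat := iter j (ceil_scale p q) 1.

Lemma ceil_orbitS p q j : ceil_orbit p q j.+1 = ceil_div (p * ceil_orbit p q j) q.
Proof. by []. Qed.

Definition ceil_scale_residues (p q k : nat) : seq nat :=
  [seq iter k (ceil_scale p q) j %% p ^ k | j <- iota 0 (q ^ k)].

Variables p q : nat.
Hypothesis q_gt0 : 0 < q.

Lemma iter_ceil_scaleDM k n t :
  iter k (ceil_scale p q) (n + q ^ k * t) = iter k (ceil_scale p q) n + p ^ k * t.
Proof.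
elim: k n t => [|k IHk] n t /=; first by rewrite !mul1n.
rewrite expnS -mulnA mulnCA IHk /ceil_scale mulnDr.
by rewrite (mulnC q) !mulnA ceil_divDMl // -expnS.
Qed.

Lemma iter_ceil_scale_mod k n :
  iter k (ceil_scale p q) n %% p ^ k = iter k (ceil_scale p q) (n %% q ^ k) %% p ^ k.
Proof.
by rewrite {1}(divn_eq n (q ^ k)) addnC mulnC iter_ceil_scaleDM mulnC addnC modnMDl.
Qed.

Lemma ceil_orbit_residue k i :
  ceil_orbit p q (k + i) %% p ^ k \in ceil_scale_residues p q k.
Proof.
rewrite /ceil_orbit iterD iter_ceil_scale_mod; apply: map_f.
by rewrite mem_iota ltn_pmod // expn_gt0 q_gt0.
Qed.

End CeilDiv.

Section RealLemmas.
Context {R : realType}.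

Lemma nested_itv_point (u v : nat -> R) :
  nondecreasing_seq u -> nonincreasing_seq v -> (forall j, u j <= v j) ->
  exists x, forall j, u j <= x <= v j.
Proof.
move=> u_nd v_ni uv.
have u_le_v j m : u j <= v m.
  apply: (le_trans (u_nd _ _ (leq_maxl j m))).
  exact: le_trans (uv _) (v_ni _ _ (leq_maxr j m)).
have u_sup : has_sup (range u).
  by split; [exists (u 0%N), 0%N | exists (v 0%N) => _ [j _ <-]].
exists (sup (range u)) => j; apply/andP; split.
  exact: sup_upper_bound u_sup _ (ex_intro2 _ _ j I erefl).
by apply: ge_sup; [exists (u 0%N), 0%N | move=> _ [m _ <-]].
Qed.

Lemma geometric_shadow (r : R) (a : nat -> R) : 0 < r ->
  (forall j, r * a j <= a j.+1) -> (forall j, a j.+1 + 1 <= r * (a j + 1)) ->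
  exists xi, forall j, a j <= xi * r ^+ j <= a j + 1.
Proof.
move=> r_gt0 a_lo a_up.
have rj_gt0 j : 0 < r ^+ j by rewrite exprn_gt0.
have [|||xi xiP] := @nested_itv_point (fun j => a j / r ^+ j) (fun j => (a j + 1) / r ^+ j).
- apply/nondecreasing_seqP => j; rewrite exprS invfM mulrA ler_pM2r ?invr_gt0 //.
  by rewrite ler_pdivlMr // mulrC.
- apply/nonincreasing_seqP => j; rewrite exprS invfM mulrA ler_pM2r ?invr_gt0 //.
  by rewrite ler_pdivrMr // mulrC.
- by move=> j; rewrite ler_pM2r ?invr_gt0 // lerDl.
exists xi => j; have /andP[lo up] := xiP j.
apply/andP; split; [rewrite -ler_pdivrMr | rewrite -ler_pdivlMr] => //.
Qed.

Lemma frac_natD (m : nat) (t : R) : 0 <= t < 1 -> Defs.frac (m%:R + t) = t.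
Proof.
move=> /andP[t_ge0 t_lt1]; rewrite /Defs.frac (@floor_def _ _ m%:Z).
  by rewrite -[m%:~R]/(m%:R) addrAC subrr add0r.
by rewrite intrD1 -[m%:~R]/(m%:R) lerDl t_ge0 ltrD2l.
Qed.

Lemma frac_div_nat (M n : nat) (t : R) : (0 < M)%N -> 0 <= t < 1 ->
  Defs.frac ((n%:R + t) / M%:R) = ((n %% M)%:R + t) / M%:R.
Proof.
move=> M_gt0 /andP[t_ge0 t_lt1]; have M_gt0' : 0 < M%:R :> R by rewrite ltr0n.
rewrite {1}(divn_eq n M) natrD natrM -addrA mulrDl mulfK ?gt_eqF // frac_natD //.
rewrite divr_ge0 ?addr_ge0 ?ler0n //= ltr_pdivrMr // mul1r.
apply: lt_le_trans (_ : (n %% M).+1%:R <= _); last by rewrite ler_nat ltn_pmod.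
by rewrite -natr1 ltrD2l.
Qed.

Lemma union_itvP (s : seq (interval R)) x :
  union_itv s x <-> exists2 j, j \in s & [set` j] x.
Proof.
elim: s => [|j s IHs]; rewrite /union_itv ?big_nil ?big_cons; first by split=> // -[].
split=> [[jx | /IHs[i si ix]] | [i]]; first by exists j; rewrite ?mem_head.
  by exists i; rewrite // in_cons si orbT.
by rewrite in_cons => /orP[/eqP-> | si] ix; [left | right; apply/IHs; exists i].
Qed.

Lemma union_itv_flattenP (ss : seq (seq (interval R))) x :
  union_itv (flatten ss) x <-> exists2 s, s \in ss & union_itv s x.
Proof.
rewrite union_itvP; split=> [[j /flattenP[s ss_s sj] jx] | [s ss_s /union_itvP[j sj jx]]].
  by exists s => //; apply/union_itvP; exists j.
by exists j => //; apply/flattenP; exists s.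
Qed.

Lemma measurable_union_itv (s : seq (interval R)) : measurable (union_itv s).
Proof.
by elim: s => [|j s IHs]; rewrite /union_itv ?big_nil ?big_cons //; apply: measurableU.
Qed.

Lemma lebesgue_measure_union_itv_le (s : seq (interval R)) :
  (lebesgue_measure (union_itv s) <= \sum_(j <- s) lebesgue_measure [set` j])%E.
Proof.
elim: s => [|j s IHs]; rewrite /union_itv ?big_nil ?big_cons ?measure0 //.
apply: le_trans (measureU2 _ _ _) _ => //; first exact: measurable_union_itv.
exact: leeD.
Qed.

(* The point interval catches [{x / M}] in the boundary case [x = n + 1]. *)
Definition residue_cell (M m : nat) : seq (interval R) :=
  [:: `[m%:R / M%:R, m.+1%:R / M%:R[; `[(m.+1 %% M)%:R / M%:R, (m.+1 %% M)%:R / M%:R]].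

Lemma residue_cell_sub (M m : nat) : (m < M)%N -> union_itv (residue_cell M m) `<=` `[0, 1[.
Proof.
move=> mM x /union_itvP[j]; have M_gt0 : 0 < M%:R :> R by rewrite ltr0n (leq_ltn_trans _ mM).
rewrite !inE => /orP[] /eqP-> /=; rewrite !in_itv /= => /andP[lo hi].
  rewrite (le_trans _ lo) ?divr_ge0 //= (lt_le_trans hi) //.
  by rewrite ler_pdivrMr // mul1r ler_nat.
rewrite (le_trans _ lo) ?divr_ge0 //= (le_lt_trans hi) //.
by rewrite ltr_pdivrMr // mul1r ltr_nat ltn_pmod // (leq_ltn_trans _ mM).
Qed.

Lemma sum_lebesgue_measure_residue_cell (M m : nat) : (0 < M)%N ->
  \sum_(j <- residue_cell M m) lebesgue_measure [set` j] = (M%:R^-1)%:E.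
Proof.
move=> M_gt0; rewrite !big_cons big_nil !lebesgue_measure_itv /= !lte_fin ltxx adde0 addr0.
rewrite ltr_pM2r ?invr_gt0 ?ltr0n // ltr_nat ltnSn -EFinD -mulrBl -natrB //.
by rewrite subSnn mul1r.
Qed.

Lemma frac_div_residue_cell (M n : nat) (x : R) : (0 < M)%N ->
  n%:R <= x <= n%:R + 1 -> union_itv (residue_cell M (n %% M)) (Defs.frac (x / M%:R)).
Proof.
move=> M_gt0 /andP[n_le_x x_le_n1]; have M_gt0' : 0 < M%:R :> R by rewrite ltr0n.
apply/union_itvP; have [x_lt_n1 | x_ge_n1] := ltP x (n%:R + 1).
  exists `[(n %% M)%:R / M%:R, (n %% M).+1%:R / M%:R[; first exact: mem_head.
  rewrite -(subrKC n%:R x) frac_div_nat //=; last first.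
    by rewrite subr_ge0 n_le_x /= ltrBlDl.
  rewrite in_itv /= ler_pM2r ?ltr_pM2r ?invr_gt0 // lerDl subr_ge0 n_le_x /=.
  by rewrite -natr1 ltrD2l ltrBlDl.
exists `[((n %% M).+1 %% M)%:R / M%:R, ((n %% M).+1 %% M)%:R / M%:R].
  by rewrite !inE eqxx orbT.
have -> : x = n.+1%:R + 0 by rewrite addr0 -natr1; apply/eqP; rewrite eq_le x_le_n1.
rewrite frac_div_nat ?lexx ?ltr01 // addr0 -addn1 modnDml addn1.
by rewrite /= in_itv /= lexx.
Qed.

End RealLemmas.

Definition residue_cover (R : realType) (p q k : nat) : seq (interval R) :=
  flatten [seq residue_cell (p ^ k) m | m <- ceil_scale_residues p q k].

Section ResidueCover.
Variables (R : realType) (p q k : nat).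
Hypotheses (q_gt0 : (0 < q)%N) (p_ge : (2 * q - 1 <= p)%N).

Let p_gt0 : (0 < p)%N. Proof. lia. Qed.

Lemma residue_cover_sub : union_itv (residue_cover R p q k) `<=` `[0, 1[.
Proof.
move=> x /union_itv_flattenP[_ /mapP[m /mapP[j _ ->] ->]].
by apply: residue_cell_sub; rewrite ltn_pmod // expn_gt0 p_gt0.
Qed.

Lemma lebesgue_measure_residue_cover :
  (lebesgue_measure (union_itv (residue_cover R p q k)) <= ((q%:R / p%:R) ^+ k)%:E)%E.
Proof.
apply: le_trans (lebesgue_measure_union_itv_le _) _.
rewrite big_flatten big_map /=.
rewrite (eq_bigr (fun=> ((p ^ k)%:R^-1)%:E)) => [|m _]; last first.
  by apply: sum_lebesgue_measure_residue_cell; rewrite expn_gt0 p_gt0.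
rewrite sumEFin big_const_seq count_predT size_map size_iota iter_addr_0 lee_fin.
by rewrite expr_div_n -!natrX -[_ *+ _]mulr_natl.
Qed.

Lemma ceil_orbit_shadow : exists xi : R, forall j,
  (ceil_orbit p q j)%:R <= xi * (p%:R / q%:R) ^+ j <= (ceil_orbit p q j)%:R + 1.
Proof.
apply: geometric_shadow => [|j|j]; first by rewrite divr_gt0 ?ltr0n.
  rewrite mulrAC ler_pdivrMr ?ltr0n // -!natrM ler_nat ceil_orbitS.
  by rewrite [(_ * q)%N]mulnC ceil_div_ge.
rewrite mulrAC ler_pdivlMr ?ltr0n // !natr1 -!natrM ler_nat.
have := ceil_div_le (p * ceil_orbit p q j) q; rewrite ceil_orbitS; lia.
Qed.

Lemma Zset_residue_cover : Zset (p%:R / q%:R) (union_itv (residue_cover R p q k)) !=set0.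
Proof.
have [xi xiP] := ceil_orbit_shadow.
have xi_gt0 : 0 < xi.
  by have /andP[+ _] := xiP 0%N; rewrite expr0 mulr1; apply: lt_le_trans.
have r_gt0 : 0 < p%:R / q%:R :> R by rewrite divr_gt0 ?ltr0n.
exists (xi * (p%:R / q%:R) ^+ k / (p ^ k)%:R); split=> [|i].
  by rewrite !mulr_gt0 ?exprn_gt0 ?invr_gt0 ?ltr0n ?expn_gt0 ?p_gt0.
rewrite mulrAC -(mulrA xi) -exprD; apply/union_itv_flattenP.
exists (residue_cell (p ^ k) (ceil_orbit p q (k + i) %% p ^ k)).
  exact/map_f/ceil_orbit_residue.
by apply: frac_div_residue_cell; rewrite ?expn_gt0 ?p_gt0.
Qed.

End ResidueCover.

Theorem theorem2 (R : realType) (p q k : nat) :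
  (2 <= q)%N -> (q < p)%N -> coprime p q -> (2 * q - 1 <= p)%N -> (0 < k)%N ->
  exists s : seq (interval R),
    union_itv s `<=` `[0, 1[%classic /\
    (lebesgue_measure (union_itv s) <= ((q%:R / p%:R) ^+ k)%:E)%E /\
    Zset (p%:R / q%:R) (union_itv s) !=set0.
Proof.
move=> q_ge2 _ _ p_ge _; have q_gt0 : (0 < q)%N by apply: leq_trans q_ge2.
exists (residue_cover R p q k); split; last split.
- exact: residue_cover_sub.
- exact: lebesgue_measure_residue_cover.
- exact: Zset_residue_cover.
Qed.
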